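(* Let $\mathcal{B}\subseteq\mathcal{C}$ be $*$-invariant subspaces of $\mathcal{A}$ with $1\in\mathcal{B}$, let $m\ge1$ with $\mathcal{B}^{[m]}\subseteq\mathcal{C}$, and let $L$ be a hermitian linear functional on $\mathcal{C}^2$ with $\mathcal{C}=\mathcal{B}+K_L(\mathcal{C})$. Put $\mathcal{K}:=K_L(\mathcal{C})\cap\mathcal{B}^{[1]}$. Then $\mathcal{K}^{[2m-1]}\cap\mathcal{C}\subseteq K_L(\mathcal{C})$.
   Context: $\mathcal{A}$ is a complex unital $*$-algebra with fixed generators $\{a_i:i\in I\}$, the set being closed under $*$. For a subspace $V$, $V^+:=V+\mathrm{Lin}\{a_iv:i\in I,v\in V\}$, $V^{[0]}=V$, $V^{[l+1]}=(V^{[l]})^+$. $\mathcal{C}^2:=\mathrm{Lin}\{ab:a,b\in\mathcal{C}\}$; $L$ hermitian means $L(b^* )=\overline{L(b)}$; $K_L(\mathcal{C}):=\{a\in\mathcal{C}: L(b^*a)=0\ \forall b\in\mathcal{C}\}$. *)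

From HB Require Import structures.
From mathcomp Require Import all_boot all_order all_algebra.
Set Implicit Arguments. Unset Strict Implicit. Unset Printing Implicit Defensive.
Import Order.TTheory GRing.Theory Num.Theory.
Local Open Scope ring_scope.

Section StarAlg.
Variables (C : numClosedFieldType) (A : algType C).

Definition is_star (star : A -> A) : Prop :=
  [/\ forall x, star (star x) = x,
      forall x y, star (x + y) = star x + star y,
      forall (c : C) x, star (c *: x) = c^* *: star x
    & forall x y, star (x * y) = star y * star x].

Definition subspace (V : A -> Prop) : Prop :=
  [/\ V 0, forall x y, V x -> V y -> V (x + y)
    & forall (c : C) x, V x -> V (c *: x)].

Definition star_invariant (star : A -> A) (V : A -> Prop) : Prop :=
  forall x, V x -> V (star x).

Definition lin (S : A -> Prop) : A -> Prop :=
  fun x => forall W, subspace W -> (forall y, S y -> W y) -> W x.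

Definition sumsp (V W : A -> Prop) : A -> Prop :=
  fun x => exists v w, [/\ V v, W w & x = v + w].

Definition subalgebra (W : A -> Prop) : Prop :=
  [/\ subspace W, W 1 & forall x y, W x -> W y -> W (x * y)].

Definition generated_by (I : Type) (a : I -> A) : A -> Prop :=
  fun x => forall W, subalgebra W -> (forall i, W (a i)) -> W x.

Definition splus (I : Type) (a : I -> A) (V : A -> Prop) : A -> Prop :=
  sumsp V (lin (fun x => exists i v, V v /\ x = a i * v)).

Fixpoint sbr (I : Type) (a : I -> A) (l : nat) (V : A -> Prop) : A -> Prop :=
  match l with
  | 0%N => V
  | l'.+1 => splus a (sbr a l' V)
  end.

Definition sq (V : A -> Prop) : A -> Prop :=
  lin (fun x => exists u v, [/\ V u, V v & x = u * v]).

(* L : A -> C is a linear functional on the subspace D (values outside D irrelevant) *)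
Definition linear_on (D : A -> Prop) (L : A -> C) : Prop :=
  (forall x y, D x -> D y -> L (x + y) = L x + L y) /\
  (forall (c : C) x, D x -> L (c *: x) = c * L x).

Definition hermitian_on (star : A -> A) (D : A -> Prop) (L : A -> C) : Prop :=
  forall b, D b -> L (star b) = (L b)^*.

Definition KL (star : A -> A) (L : A -> C) (V : A -> Prop) : A -> Prop :=
  fun x => V x /\ forall b, V b -> L (star b * x) = 0.

End StarAlg.

From HB Require Import structures.
From mathcomp Require Import all_boot all_order all_algebra.
From mathcomp Require Import zify.
Set Implicit Arguments. Unset Strict Implicit. Unset Printing Implicit Defensive.
Import Order.TTheory GRing.Theory Num.Theory.
Local Open Scope ring_scope.

(* Two inductions along the filtration V^[l].  First, while the level stays
   below m, multiplying an element v of K_L(C) by a generator a_i keeps it in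
   K_L(C): for b in B, L(b^* a_i v) = L((a_i^* b)^* v) and a_i^* b lies in
   B^[1], inside C.  Hence K^[m-1] lies in K_L(C).  Second, the same transfer
   moves each of the remaining m generators from x onto b: for x in K^[2m-1]
   and b in B, b^* x is a combination of products u^* v with u in B^[m], inside
   C, and v in K^[m-1], inside K_L(C); so L(b^* x) = 0.  The decomposition
   C = B + K_L(C) then upgrades orthogonality to B into membership in K_L(C). *)

Section Subspaces.
Variables (C : numClosedFieldType) (A : algType C).
Implicit Types (S V W : A -> Prop).

Lemma lin0 S : lin S 0.
Proof. by move=> W []. Qed.

Lemma subspace_lin S : subspace (lin S).
Proof.
split=> [|x y Sx Sy W WS SW | c x Sx W WS SW]; first exact: lin0.
  by case: (WS) => _ WD _; apply: WD; [apply: Sx | apply: Sy].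
by case: (WS) => _ _ WZ; apply: WZ; apply: Sx.
Qed.

Lemma lin_gen S x : S x -> lin S x.
Proof. by move=> Sx W _; apply. Qed.

Lemma subspaceI V W :
  subspace V -> subspace W -> subspace (fun x => V x /\ W x).
Proof.
case=> V0 VD VZ [W0 WD WZ]; split=> // [x y [? ?] [? ?] | c x [? ?]].
  by split; [apply: VD | apply: WD].
by split; [apply: VZ | apply: WZ].
Qed.

Lemma subspace_sumsp V W : subspace V -> subspace W -> subspace (sumsp V W).
Proof.
case=> V0 VD VZ [W0 WD WZ]; split.
- by exists 0, 0; rewrite addr0.
- move=> _ _ [v [w [Vv Ww ->]]] [v' [w' [Vv' Ww' ->]]].
  by exists (v + v'), (w + w'); rewrite addrACA; split; [apply: VD | apply: WD |].
- move=> c _ [v [w [Vv Ww ->]]].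
  by exists (c *: v), (c *: w); rewrite scalerDr; split; [apply: VZ | apply: WZ |].
Qed.

Variables (I : Type) (a : I -> A).

Lemma sub_splus V x : V x -> splus a V x.
Proof. by move=> Vx; exists x, 0; rewrite addr0; split=> //; apply: lin0. Qed.

Lemma splus_mul V i v : subspace V -> V v -> splus a V (a i * v).
Proof.
case=> V0 _ _ Vv; exists 0, (a i * v); rewrite add0r; split=> //.
by apply: lin_gen; exists i, v.
Qed.

Lemma splus_min V W x : subspace W -> (forall y, V y -> W y) ->
  (forall i v, V v -> W (a i * v)) -> splus a V x -> W x.
Proof.
move=> WS VW aVW [v [w [Vv lin_w ->]]]; case: (WS) => _ WD _.
apply: WD; first exact: VW.
by apply: lin_w => // _ [i [u [Vu ->]]]; apply: aVW.
Qed.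

Lemma subspace_sbr V k : subspace V -> subspace (sbr a k V).
Proof.
by move=> VS; elim: k => //= k IHk; apply: subspace_sumsp => //; apply: subspace_lin.
Qed.

Lemma sbr_mono V k l x : (k <= l)%N -> sbr a k V x -> sbr a l V x.
Proof.
elim: l => [|l IHl]; first by rewrite leqn0 => /eqP ->.
by rewrite leq_eqVlt ltnS => /predU1P [-> // | kl Vx]; apply/sub_splus/IHl.
Qed.

Lemma sbrD V k l : sbr a (k + l) V = sbr a k (sbr a l V).
Proof. by elim: k => //= k <-. Qed.

End Subspaces.

Section Orthogonality.
Variables (C : numClosedFieldType) (A : algType C) (star : A -> A).
Variables (Cs : A -> Prop) (L : A -> C).
Hypotheses (Hstar : is_star star) (HC : subspace Cs) (HCstar : star_invariant star Cs).
Hypotheses (HL : linear_on (sq Cs) L) (HLherm : hermitian_on star (sq Cs) L).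

Local Notation KL := (KL star L Cs).

Lemma sq_mul u v : Cs u -> Cs v -> sq Cs (u * v).
Proof. by move=> Cu Cv; apply: lin_gen; exists u, v. Qed.

Lemma subspace_KL : subspace KL.
Proof.
case: HC HL => C0 CD CZ [LD LZ]; split.
- by split=> // b _; rewrite mulr0 -(scale0r 0) LZ ?mul0r //; apply: lin0.
- move=> x y [Cx Lx] [Cy Ly]; split=> [|b Cb]; first exact: CD.
  by rewrite mulrDr LD ?Lx ?Ly ?addr0 //; apply: sq_mul => //; apply: HCstar.
- move=> c x [Cx Lx]; split=> [|b Cb]; first exact: CZ.
  by rewrite -scalerAr LZ ?Lx ?mulr0 //; apply: sq_mul => //; apply: HCstar.
Qed.

Lemma KL_orthogonal_l b x : KL b -> Cs x -> L (star b * x) = 0.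
Proof.
case: Hstar => starK _ _ starM [Cb Lb] Cx.
have := HLherm (sq_mul (HCstar Cb) Cx); rewrite starM starK Lb //.
by move/(congr1 Num.conj); rewrite conjCK conjC0.
Qed.

Definition starC_KL : A -> Prop :=
  lin (fun z => exists u v, [/\ Cs u, KL v & z = star u * v]).

Lemma L_starC_KL z : starC_KL z -> L z = 0.
Proof.
case: HL => LD LZ Zz; suff [] : sq Cs z /\ L z = 0 by [].
apply: (Zz (fun z => sq Cs z /\ L z = 0)) => [|_ [u [v [Cu [Cv Lv] ->]]]]; last first.
  by split; [apply: sq_mul => //; apply: HCstar | apply: Lv].
have [sq0 sqD sqZ] := subspace_lin (fun x => exists u v, [/\ Cs u, Cs v & x = u * v]).
split=> [|x y [sqx Lx] [sqy Ly] | c x [sqx Lx]].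
- by split=> //; rewrite -(scale0r 0) LZ ?mul0r.
- by split; [apply: sqD | rewrite LD ?Lx ?Ly ?addr0].
- by split; [apply: sqZ | rewrite LZ ?Lx ?mulr0].
Qed.

Variable B : A -> Prop.
Hypotheses (HBC : forall x, B x -> Cs x) (HCdec : forall x, Cs x -> sumsp B KL x).

Lemma KL_of_B_orthogonal x :
  Cs x -> (forall b, B b -> L (star b * x) = 0) -> KL x.
Proof.
case: Hstar HL => _ starD _ _ [LD _] Cx LBx; split=> // c Cc.
have [b [k [Bb KLk ->]]] := HCdec Cc; have [Cb Ck] := (HBC Bb, KLk.1).
rewrite starD mulrDl LD ?(LBx _ Bb) ?KL_orthogonal_l ?addr0 //;
  by apply: sq_mul => //; apply: HCstar.
Qed.

End Orthogonality.

Section Transfer.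
Variables (C : numClosedFieldType) (A : algType C) (star : A -> A).
Variables (I : Type) (a : I -> A) (B : A -> Prop).
Hypotheses (starM : forall x y, star (x * y) = star y * star x) (HB : subspace B).
Hypothesis star_gen : forall i, exists j, star (a j) = a i.

Lemma star_mul_shift i j b v :
  star (a j) = a i -> star b * (a i * v) = star (a j * b) * v.
Proof. by move=> <-; rewrite starM mulrA. Qed.

Lemma star_mul_sbr (Z V : A -> Prop) n j x : subspace Z ->
  (forall v b, V v -> sbr a (n + j) B b -> Z (star b * v)) ->
  sbr a j V x -> forall b, sbr a n B b -> Z (star b * x).
Proof.
move=> [Z0 ZD ZZ]; elim: j n x => [|j IHj] n x ZVB /= Vx.
  by move=> b Bb; apply: ZVB Vx _; rewrite addn0.
apply: (splus_min (W := fun x => forall b, sbr a n B b -> Z (star b * x))) Vx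
  => [|y Vy b Bb|i v Vv b Bb].
- split=> [b _|y z Zy Zz b Bb|c y Zy b Bb]; first by rewrite mulr0.
    by rewrite mulrDr; apply: ZD; [apply: Zy | apply: Zz].
  by rewrite -scalerAr; apply: ZZ; apply: Zy.
- apply: (IHj n) Vy b Bb => v c Vv Bc; apply: ZVB Vv _.
  by apply: sbr_mono Bc; rewrite addnS.
- have [k ak] := star_gen i; rewrite (star_mul_shift _ _ ak).
  have Bkb : sbr a n.+1 B (a k * b) by apply: splus_mul (subspace_sbr _ _ HB) Bb.
  apply: (IHj n.+1) Vv _ Bkb => u c Vu Bc.
  by apply: ZVB Vu _; rewrite addnS -addSn.
Qed.

End Transfer.

Section Filtration.
Variables (C : numClosedFieldType) (A : algType C) (star : A -> A).
Variables (Cs : A -> Prop) (L : A -> C) (I : Type) (a : I -> A) (B : A -> Prop).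
Hypotheses (Hstar : is_star star) (HC : subspace Cs) (HCstar : star_invariant star Cs).
Hypotheses (HL : linear_on (sq Cs) L) (HLherm : hermitian_on star (sq Cs) L).
Hypotheses (HB : subspace B) (HBC : forall x, B x -> Cs x).
Hypothesis HCdec : forall x, Cs x -> sumsp B (KL star L Cs) x.
Hypothesis star_gen : forall i, exists j, star (a j) = a i.
Variable m : nat.
Hypotheses (Hm : (1 <= m)%N) (HBm : forall x, sbr a m B x -> Cs x).

Local Notation KL := (KL star L Cs).

Lemma KL_mul_gen i v : KL v -> Cs (a i * v) -> KL (a i * v).
Proof.
case: Hstar => _ _ _ starM [_ Lv] Cav.
apply: (KL_of_B_orthogonal Hstar HCstar HL HLherm HBC HCdec) => // b Bb.
have [j aj] := star_gen i.
rewrite (star_mul_shift starM _ _ aj); apply: Lv; apply: HBm.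
by apply: sbr_mono Hm _; apply: splus_mul HB Bb.
Qed.

Lemma sbr_KL (V : A -> Prop) k x : (forall v, V v -> KL v /\ sbr a 1 B v) ->
  (k < m)%N -> sbr a k V x -> KL x /\ sbr a k.+1 B x.
Proof.
move=> VKB; elim: k x => [|k IHk] x km; first exact: VKB.
move=> /= Vx; apply: (splus_min (W := fun x => KL x /\ sbr a k.+2 B x)) Vx
  => [|y Vy|i v Vv].
- by apply: subspaceI; [apply: subspace_KL | apply: subspace_sbr].
- by have [KLy By] := IHk y (ltnW km) Vy; split=> //; apply: sub_splus.
- have [KLv Bv] := IHk v (ltnW km) Vv.
  have Bav : sbr a k.+2 B (a i * v) by apply: splus_mul (subspace_sbr _ _ HB) Bv.
  by split=> //; apply: KL_mul_gen KLv _; apply: HBm; apply: sbr_mono km Bav.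
Qed.

End Filtration.

Theorem lemma3p3 (C : numClosedFieldType) (A : algType C) (star : A -> A)
    (I : Type) (a : I -> A)
    (Hstar : is_star star)
    (Hgen_star : forall i, exists j, star (a i) = a j)
    (Hgen : forall x, generated_by a x)
    (B Cs : A -> Prop)
    (HB : subspace B) (HBstar : star_invariant star B)
    (HC : subspace Cs) (HCstar : star_invariant star Cs)
    (HBC : forall x, B x -> Cs x) (HB1 : B 1)
    (m : nat) (Hm : (1 <= m)%N)
    (HBm : forall x, sbr a m B x -> Cs x)
    (L : A -> C) (HLlin : linear_on (sq Cs) L) (HLherm : hermitian_on star (sq Cs) L)
    (HCdec : forall x, Cs x <-> sumsp B (KL star L Cs) x) :
  let K := fun x => KL star L Cs x /\ sbr a 1 B x in
  forall x, sbr a (2 * m - 1) K x -> Cs x -> KL star L Cs x.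
Proof.
move=> K x Kx Cx; have [starK _ _ starM] := Hstar.
have star_gen i : exists j, star (a j) = a i.
  by have [j aj] := Hgen_star i; exists j; rewrite -aj starK.
have CdecB y : Cs y -> sumsp B (KL star L Cs) y by move/HCdec.
apply: (KL_of_B_orthogonal Hstar HCstar HLlin HLherm HBC CdecB) => // b Bb.
apply: (L_starC_KL HCstar HLlin).
have {}Kx : sbr a m (sbr a m.-1 K) x.
  by rewrite -sbrD; have <- : (2 * m - 1 = m + m.-1)%N by lia.
apply: (star_mul_sbr starM HB star_gen (n := 0) _ _ Kx Bb) => [|v c Kv Bc].
  exact: subspace_lin.
have m1_lt_m : (m.-1 < m)%N by rewrite prednK.
have [KLv _] := sbr_KL Hstar HC HCstar HLlin HLherm HB HBC CdecB star_gen Hm HBm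
  (fun _ => id) m1_lt_m Kv.
by apply: lin_gen; exists c, v; split=> //; apply: HBm.
Qed.
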